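(* Let $M\in\mathbb{R}^{m\times n}$ with $\operatorname{rank}(M)=r$, and let $\{p_i\}_{i=1}^n$ be a probability distribution on $[n]$ with $p_i>0$ for all $i$, $p_{\min}=\min_{i\in[n]}p_i$. For $j=1,\dots,d$ independently sample $i_j\in[n]$ with $\Pr[i_j=i]=p_i$, and let $A\in\mathbb{R}^{m\times d}$ have columns $A^{(j)}=M^{(i_j)}/\sqrt{d\,p_{i_j}}$. Let $t>0$. If $d\ge 7\mu(r)r(t+\ln r)/(n\,p_{\min})$, then with probability at least $1-e^{-t}$, $\operatorname{rank}(A)=r$.
   Context: For a matrix $B$, $B_{(i)}$ denotes its $i$-th row and $B^{(j)}$ its $j$-th column. With $\bar U\in\mathbb{R}^{m\times r}$, $\bar V\in\mathbb{R}^{n\times r}$ the top-$r$ left and right singular vectors of $M$, the incoherence is $\mu(r)=\max\left(\max_{i\in[m]}\frac{m}{r}\|\bar U_{(i)}\|_2^2,\ \max_{i\in[n]}\frac{n}{r}\|\bar V_{(i)}\|_2^2\right)$. *)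

From HB Require Import structures.
From mathcomp Require Import all_boot all_order all_algebra.
From mathcomp Require Import all_classical all_reals all_analysis.
Set Implicit Arguments. Unset Strict Implicit. Unset Printing Implicit Defensive.
Import Order.TTheory GRing.Theory Num.Theory.
Local Open Scope ring_scope.

Definition rownorm2 (R : realType) (a b : nat) (B : 'M[R]_(a, b)) (i : 'I_a) : R :=
  \sum_(k < b) (B i k) ^+ 2.

(* incoherence mu(r) computed from left/right singular vector matrices U, V.
   Row norms are nonnegative, so 0 is a harmless base for the iterated max. *)
Definition incoherence (R : realType) (m n r : nat)
  (U : 'M[R]_(m, r)) (V : 'M[R]_(n, r)) : R :=
  Num.max (\big[Num.max/0]_(i < m) (m%:R / r%:R * rownorm2 U i))
          (\big[Num.max/0]_(i < n) (n%:R / r%:R * rownorm2 V i)).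

(* minimum of p over [n]; for a probability vector every p i <= 1,
   so 1 is a harmless base for the iterated min *)
Definition pmin (R : realType) (n : nat) (p : 'I_n -> R) : R :=
  \big[Num.min/1]_(i < n) p i.

Definition sampleA (R : realType) (m n d : nat) (M : 'M[R]_(m, n))
  (p : 'I_n -> R) (f : {ffun 'I_d -> 'I_n}) : 'M[R]_(m, d) :=
  \matrix_(a < m, j < d) (M a (f j) / Num.sqrt (d%:R * p (f j))).

(* probability of an event on d i.i.d. samples i_1..i_d with Pr[i_j = i] = p i *)
Definition iid_prob (R : realType) (n d : nat) (p : 'I_n -> R)
  (E : {ffun 'I_d -> 'I_n} -> bool) : R :=
  \sum_(f : {ffun 'I_d -> 'I_n} | E f) \prod_(j < d) p (f j).

From HB Require Import structures.
From mathcomp Require Import all_boot all_order all_algebra.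
From mathcomp Require Import all_classical all_reals all_analysis.
From mathcomp Require Import ring lra.
Import Order.TTheory GRing.Theory Num.Theory.
Local Open Scope ring_scope.

(* Write M = U diag(s) V^T.  Rescaling the sampled columns by nonzero factors
   does not change ranks, so rank A is the rank of the sampled rows
   V_(i_1), ..., V_(i_d) of V.  Let W be the span of the rows sampled so far.
   Projecting onto the orthogonal complement of W shows that the rows of V
   lying outside W have total squared norm at least r - rank W; since each
   squared row norm is at most mu r / n and each p_i is at least p_min, a
   fresh sample leaves W with probability at least q (r - rank W), where
   q = n p_min / (mu r).  Hence the expected rank deficit after d samples is
   at most (1 - q)^d r <= exp(-q d) r <= exp(-t), and Markov's inequality
   bounds the probability that rank A < r. *)

Set Implicit Arguments. Unset Strict Implicit. Unset Printing Implicit Defensive.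

Section IidMean.
Variables (R : realType) (n : nat) (p : 'I_n -> R).

Definition iid_mean k (X : {ffun 'I_k -> 'I_n} -> R) : R :=
  \sum_(f : {ffun 'I_k -> 'I_n}) (\prod_(j < k) p (f j)) * X f.

Definition ffun_cons k (i : 'I_n) (g : {ffun 'I_k -> 'I_n}) : {ffun 'I_k.+1 -> 'I_n} :=
  [ffun j => if unlift ord0 j is Some j' then g j' else i].

Lemma ffun_cons0 k i (g : {ffun 'I_k -> 'I_n}) : ffun_cons i g ord0 = i.
Proof. by rewrite ffunE unlift_none. Qed.

Lemma ffun_consS k i (g : {ffun 'I_k -> 'I_n}) j : ffun_cons i g (lift ord0 j) = g j.
Proof. by rewrite ffunE liftK. Qed.

Lemma big_ffun_cons k (G : {ffun 'I_k.+1 -> 'I_n} -> R) :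
  \sum_f G f = \sum_i \sum_(g : {ffun 'I_k -> 'I_n}) G (ffun_cons i g).
Proof.
rewrite pair_big /= (reindex (fun x : 'I_n * {ffun 'I_k -> 'I_n} => ffun_cons x.1 x.2)) //=.
exists (fun f => (f ord0, [ffun j => f (lift ord0 j)])).
- move=> [i g] _ /=; rewrite ffun_cons0; congr pair; apply/ffunP => j.
  by rewrite ffunE ffun_consS.
- move=> f _; apply/ffunP => j; rewrite ffunE.
  by case: unliftP => [j'|] -> /=; rewrite ?ffunE.
Qed.

Lemma iid_meanS k X :
  iid_mean X = \sum_i p i * iid_mean (fun g : {ffun 'I_k -> 'I_n} => X (ffun_cons i g)).
Proof.
rewrite /iid_mean big_ffun_cons; apply: eq_bigr => i _; rewrite big_distrr.
apply: eq_bigr => g _; rewrite big_ord_recl ffun_cons0 -mulrA; congr (_ * (_ * _)).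
by apply: eq_bigr => j _; rewrite ffun_consS.
Qed.

Lemma eq_iid_mean k (X Y : {ffun 'I_k -> 'I_n} -> R) :
  (forall f, X f = Y f) -> iid_mean X = iid_mean Y.
Proof. by move=> XY; apply: eq_bigr => f _; rewrite XY. Qed.

Lemma iid_prob_le_mean k (E : {ffun 'I_k -> 'I_n} -> bool) (X : {ffun 'I_k -> 'I_n} -> R) :
  (forall i, 0 <= p i) -> (forall f, 0 <= X f) -> (forall f, E f -> 1 <= X f) ->
  iid_prob p E <= iid_mean X.
Proof.
move=> p_ge0 X_ge0 XE; rewrite /iid_prob /iid_mean big_mkcond /=.
apply: ler_sum => f _; have w_ge0 : 0 <= \prod_(j < k) p (f j) by apply: prodr_ge0.
by case: ifP => [/XE|_]; [apply: ler_peMr | apply: mulr_ge0].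
Qed.

Hypothesis p_sum1 : \sum_i p i = 1.

Lemma iid_weight_sum k : \sum_(f : {ffun 'I_k -> 'I_n}) \prod_(j < k) p (f j) = 1.
Proof.
rewrite -(bigA_distr_bigA (fun (_ : 'I_k) (i : 'I_n) => p i)) /=.
by rewrite (eq_bigr (fun _ => 1)) ?big1_eq.
Qed.

Lemma iid_mean_cst k (a : R) : iid_mean (fun _ : {ffun 'I_k -> 'I_n} => a) = a.
Proof. by rewrite /iid_mean -big_distrl /= iid_weight_sum mul1r. Qed.

Lemma iid_probC k (E : {ffun 'I_k -> 'I_n} -> bool) :
  iid_prob p (fun f => ~~ E f) = 1 - iid_prob p E.
Proof.
have := iid_weight_sum k; rewrite (bigID E) /= => <-.
by rewrite addrC addrK.
Qed.

End IidMean.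

Section RankFacts.
Variable F : fieldType.

Lemma eqmx_sum_rows m n (A : 'M[F]_(m, n)) : (\sum_i <<row i A>> :=: A)%MS.
Proof.
apply/eqmxP/andP; split.
  by apply/sumsmx_subP => i _; rewrite genmxE row_sub.
by apply/row_subP => i; apply: (sumsmx_sup i) => //; rewrite genmxE.
Qed.

Lemma mxrank_adds_row n (W : 'M[F]_n) (v : 'rV_n) :
  \rank (W + <<v>>)%MS = (\rank W + ~~ (v <= W)%MS)%N.
Proof.
case: (boolP (v <= W)%MS) => vW /=.
  by rewrite addn0; have /addsmx_idPl -> : (<<v>> <= W)%MS by rewrite genmxE.
have : (W < W + <<v>>)%MS.
  rewrite ltmxE addsmxSl /=; apply: contra vW => vWv.
  by apply: submx_trans vWv; rewrite -genmxE addsmxSr.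
rewrite ltmxErank => /andP [_ lt_rank]; apply/eqP.
rewrite eqn_leq addn1 lt_rank andbT -[(\rank W).+1]addn1.
apply: leq_trans (mxrank_adds_leqif W <<v>>%MS).1 _.
by rewrite leq_add2l genmxE rank_leq_row.
Qed.

Lemma mxrank_mul_linv m k q (X : 'M[F]_(m, k)) (Xl : 'M[F]_(k, m)) (Y : 'M[F]_(k, q)) :
  Xl *m X = 1%:M -> \rank (X *m Y) = \rank Y.
Proof.
move=> XlX; rewrite -mxrank_tr trmx_mul mxrankMfree ?mxrank_tr //.
by apply/row_freeP; exists Xl^T; rewrite -trmx_mul XlX trmx1.
Qed.

Lemma diag_mx_linv n (d : 'rV[F]_n) : (forall j, d 0 j != 0) ->
  diag_mx (\row_j (d 0 j)^-1) *m diag_mx d = 1%:M.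
Proof.
move=> d_neq0; rewrite mulmx_diag -diag_const_mx; congr diag_mx.
by apply/rowP => j; rewrite !mxE mulVf.
Qed.

Lemma mxrank_diag_mul m n (d : 'rV[F]_m) (Y : 'M[F]_(m, n)) :
  (forall j, d 0 j != 0) -> \rank (diag_mx d *m Y) = \rank Y.
Proof. by move/diag_mx_linv; apply: mxrank_mul_linv. Qed.

Lemma mxrank_mul_diag m n (Y : 'M[F]_(m, n)) (d : 'rV_n) :
  (forall j, d 0 j != 0) -> \rank (Y *m diag_mx d) = \rank Y.
Proof.
by move=> d_neq0; rewrite -mxrank_tr trmx_mul tr_diag_mx mxrank_diag_mul ?mxrank_tr.
Qed.

End RankFacts.

Section OrthoProj.
Variable F : realFieldType.

Lemma quad_form_ge0 n (w : 'rV[F]_n) : 0 <= (w *m w^T) 0 0.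
Proof. by rewrite mxE; apply: sumr_ge0 => j _; rewrite mxE -expr2 sqr_ge0. Qed.

Lemma quad_form_row m n (A : 'M[F]_(m, n)) (P : 'M[F]_n) i :
  (A *m P *m A^T) i i = (row i A *m P *m (row i A)^T) 0 0.
Proof.
rewrite !mxE; apply: eq_bigr => b _; rewrite !mxE; congr (_ * _).
by apply: eq_bigr => a _; rewrite !mxE.
Qed.

Lemma mulmx_trmx_eq0 m k (X : 'M[F]_(m, k)) : X *m X^T = 0 -> X = 0.
Proof.
move=> XX0; apply/matrixP => i j; rewrite mxE.
have XiX_ge0 l : true -> 0 <= X i l * X^T l i by rewrite mxE -expr2 sqr_ge0.
have XiX0 : \sum_l X i l * X^T l i = 0.
  by have := congr1 (fun A : 'M[F]_m => A i i) XX0; rewrite !mxE.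
have /eqP := psumr_eq0P XiX_ge0 XiX0 (i := j) isT.
by rewrite mxE mulf_eq0 orbb => /eqP.
Qed.

Lemma gram_unitmx k n (B : 'M[F]_(k, n)) : row_free B -> B *m B^T \in unitmx.
Proof.
move=> Bfree; rewrite -row_free_unit; apply: inj_row_free => v vG0.
apply/eqP; rewrite -(mulmx_free_eq0 _ Bfree); apply/eqP/mulmx_trmx_eq0.
by rewrite trmx_mul mulmxA -(mulmxA v) vG0 mul0mx.
Qed.

Definition orthoproj k n (B : 'M[F]_(k, n)) : 'M[F]_n := B^T *m invmx (B *m B^T) *m B.

Lemma orthoproj_tr k n (B : 'M[F]_(k, n)) : (orthoproj B)^T = orthoproj B.
Proof. by rewrite /orthoproj !trmx_mul trmxK trmx_inv trmx_mul trmxK mulmxA. Qed.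

Lemma orthoproj_idem k n (B : 'M[F]_(k, n)) :
  row_free B -> orthoproj B *m orthoproj B = orthoproj B.
Proof.
move/gram_unitmx => G_unit; rewrite /orthoproj !mulmxA.
by rewrite -(mulmxA (B^T *m invmx (B *m B^T)) B) mulmxKV.
Qed.

Lemma mxtrace_orthoproj k n (B : 'M[F]_(k, n)) :
  row_free B -> \tr (orthoproj B) = k%:R.
Proof.
by move/gram_unitmx => G_unit; rewrite /orthoproj mxtrace_mulC mulmxA mulmxV ?mxtrace1.
Qed.

Lemma quad_form_proj n (P : 'M[F]_n) (v : 'rV[F]_n) : P^T = P -> P *m P = P ->
  v *m P *m v^T = (v *m P) *m (v *m P)^T.
Proof. by move=> PT PP; rewrite trmx_mul PT mulmxA -(mulmxA v P P) PP. Qed.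

Lemma quad_form_proj_le n (P : 'M[F]_n) (v : 'rV[F]_n) : P^T = P -> P *m P = P ->
  (v *m P *m v^T) 0 0 <= (v *m v^T) 0 0.
Proof.
move=> PT PP; set Q := 1%:M - P.
have QT : Q^T = Q by rewrite /Q linearB /= trmx1 PT.
have QQ : Q *m Q = Q by rewrite /Q mulmxBr mulmx1 mulmxBl mul1mx PP subrr subr0.
have -> : v *m v^T = v *m P *m v^T + v *m Q *m v^T.
  by rewrite /Q mulmxBr mulmx1 mulmxBl addrC subrK.
by rewrite [X in _ <= X]mxE lerDl quad_form_proj // quad_form_ge0.
Qed.

End OrthoProj.

Section RowSampling.
Variables (R : realType) (n r : nat) (V : 'M[R]_(n, r)).

Definition rank_deficit (W : 'M[R]_r) : R := r%:R - (\rank W)%:R.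

Lemma rank_deficit_ge0 W : 0 <= rank_deficit W.
Proof. by rewrite subr_ge0 ler_nat rank_leq_col. Qed.

Lemma rank_deficit_ge1 W : \rank W != r -> 1 <= rank_deficit W.
Proof.
move=> rW_neq; have rW_lt : (\rank W < r)%N by rewrite ltn_neqAle rW_neq rank_leq_col.
by rewrite /rank_deficit lerBrDl -[1]/(1%:R) -natrD ler_nat addn1.
Qed.

Lemma rank_deficit0 : rank_deficit 0 = r%:R.
Proof. by rewrite /rank_deficit mxrank0 subr0. Qed.

Lemma rank_deficit_adds W (v : 'rV[R]_r) :
  rank_deficit (W + <<v>>)%MS = rank_deficit W - (~~ (v <= W)%MS)%:R.
Proof. by rewrite /rank_deficit mxrank_adds_row natrD opprD addrA. Qed.

Lemma rownorm2E i : rownorm2 V i = (row i V *m (row i V)^T) 0 0.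
Proof. by rewrite mxE; apply: eq_bigr => j _; rewrite !mxE expr2. Qed.

Hypothesis V_orth : V^T *m V = 1%:M.

Lemma sum_rownorm2 : \sum_i rownorm2 V i = r%:R.
Proof.
rewrite -mxtrace1 -V_orth mxtrace_mulC; apply: eq_bigr => i _.
by rewrite mxE; apply: eq_bigr => k _; rewrite mxE expr2.
Qed.

Lemma rownorm2_ub_gt0 (L : R) :
  (forall i, rownorm2 V i <= L) -> (0 < r)%N -> 0 < L.
Proof.
move=> rownorm2_le r_gt0.
have : r%:R <= L * n%:R.
  have -> : L * n%:R = \sum_(i < n) L by rewrite sumr_const card_ord mulr_natr.
  by rewrite -sum_rownorm2; apply: ler_sum.
have : 0 < r%:R :> R by rewrite ltr0n.
have : 0 <= n%:R :> R by [].
nra.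
Qed.

(* The diagonal of V P V^T, with P the orthogonal projection onto the
   orthogonal complement of W, has trace r - rank W, vanishes on the rows
   of V lying in W and is dominated by the squared row norms. *)
Lemma rank_deficit_le_leverage W :
  rank_deficit W <= \sum_(i | ~~ (row i V <= W)%MS) rownorm2 V i.
Proof.
pose B := row_base (kermx W^T); pose P := orthoproj B.
have Bfree : row_free B := row_base_free _.
have WB0 : W *m B^T = 0.
  have /sub_kermxP BW0 : (B <= kermx W^T)%MS by rewrite eq_row_base.
  by have := congr1 trmx BW0; rewrite trmx_mul trmxK trmx0.
have trVPV : \tr (V *m P *m V^T) = rank_deficit W.
  rewrite mxtrace_mulC mulmxA V_orth mul1mx mxtrace_orthoproj //.
  by rewrite mxrank_ker mxrank_tr natrB ?rank_leq_col.
rewrite -trVPV /mxtrace (bigID (fun i => (row i V <= W)%MS)) /= big1 ?add0r.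
  apply: ler_sum => i _; rewrite quad_form_row rownorm2E.
  exact: quad_form_proj_le (orthoproj_tr B) (orthoproj_idem Bfree).
move=> i /submxP [y Vi]; rewrite quad_form_row Vi.
by rewrite /P /orthoproj !mulmxA -(mulmxA y W) WB0 mulmx0 !mul0mx mxE.
Qed.

Definition sample_span k (f : {ffun 'I_k -> 'I_n}) : 'M[R]_r :=
  (\sum_(j < k) <<row (f j) V>>)%MS.

Lemma sample_span_cons k i (g : {ffun 'I_k -> 'I_n}) (W : 'M[R]_r) :
  (W + sample_span (ffun_cons i g) = (W + <<row i V>>) + sample_span g)%MS.
Proof.
rewrite /sample_span big_ord_recl ffun_cons0 addsmxA.
by under eq_bigr do rewrite ffun_consS.
Qed.

Lemma mxrank_sample_span k (f : {ffun 'I_k -> 'I_n}) :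
  \rank (sample_span f) = \rank (rowsub f V).
Proof.
have -> : sample_span f = (\sum_j <<row j (rowsub f V)>>)%MS.
  by apply: eq_bigr => j _; rewrite row_rowsub.
by rewrite (eqmx_sum_rows (rowsub f V)).
Qed.

End RowSampling.

Section Contraction.
Variables (R : realType) (n r : nat) (V : 'M[R]_(n, r)) (p : 'I_n -> R).
Hypotheses (V_orth : V^T *m V = 1%:M) (p_sum1 : \sum_i p i = 1).

Lemma rank_deficit_le_mass (pm L : R) W :
  0 <= pm -> (forall i, pm <= p i) -> 0 <= L -> (forall i, rownorm2 V i <= L) ->
  pm / L * rank_deficit W <= \sum_(i | ~~ (row i V <= W)%MS) p i.
Proof.
move=> pm_ge0 pm_le L_ge0 rownorm2_le; have q_ge0 : 0 <= pm / L by rewrite divr_ge0.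
apply: le_trans (ler_wpM2l q_ge0 (rank_deficit_le_leverage V_orth W)) _.
rewrite mulr_sumr; apply: ler_sum => i _; apply: le_trans (pm_le i).
apply: le_trans (ler_wpM2l q_ge0 (rownorm2_le i)) _.
by have [->|L_neq0] := eqVneq L 0; rewrite ?mulr0 ?divfK.
Qed.

Lemma mean_rank_deficit_step (pm L : R) W :
  0 <= pm -> (forall i, pm <= p i) -> 0 <= L -> (forall i, rownorm2 V i <= L) ->
  \sum_i p i * rank_deficit (W + <<row i V>>)%MS <= expR (- (pm / L)) * rank_deficit W.
Proof.
move=> pm_ge0 pm_le L_ge0 rownorm2_le.
under eq_bigr do rewrite rank_deficit_adds mulrBr.
rewrite sumrB -mulr_suml p_sum1 mul1r.
have -> : \sum_i p i * (~~ (row i V <= W)%MS)%:R = \sum_(i | ~~ (row i V <= W)%MS) p i.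
  rewrite [RHS]big_mkcond; apply: eq_bigr => i _.
  by case: (row i V <= W)%MS; rewrite ?mulr1 ?mulr0.
apply: le_trans (_ : (1 - pm / L) * rank_deficit W <= _).
  by rewrite mulrBl mul1r lerB // rank_deficit_le_mass.
by apply: ler_wpM2r; [exact: rank_deficit_ge0 | exact: expR_ge1Dx].
Qed.

Lemma mean_rank_deficit_le (c : R) :
  (forall i, 0 <= p i) -> 0 <= c ->
  (forall W, \sum_i p i * rank_deficit (W + <<row i V>>)%MS <= c * rank_deficit W) ->
  forall k W, iid_mean p (fun f : {ffun 'I_k -> 'I_n} => rank_deficit (W + sample_span V f)%MS)
    <= c ^+ k * rank_deficit W.
Proof.
move=> p_ge0 c_ge0 step; elim=> [|k IHk] W.
  under eq_iid_mean do rewrite /sample_span big_ord0 addsmx0_id.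
  by rewrite iid_mean_cst // expr0 mul1r.
rewrite iid_meanS; under eq_bigr => i _ do under eq_iid_mean do rewrite sample_span_cons.
apply: le_trans (_ : \sum_i p i * (c ^+ k * rank_deficit (W + <<row i V>>)%MS) <= _).
  by apply: ler_sum => i _; apply: ler_wpM2l.
under eq_bigr do rewrite mulrCA.
by rewrite -mulr_sumr exprSr -mulrA ler_wpM2l ?exprn_ge0.
Qed.

End Contraction.

Lemma sampleA_colsub (R : realType) m n d (M : 'M[R]_(m, n)) (p : 'I_n -> R)
    (f : {ffun 'I_d -> 'I_n}) :
  sampleA M p f = colsub f M *m diag_mx (\row_j (Num.sqrt (d%:R * p (f j)))^-1).
Proof. by apply/matrixP => a j; rewrite mul_mx_diag !mxE. Qed.

Lemma mxrank_sampleA (R : realType) m n r d (M : 'M[R]_(m, n)) (U : 'M[R]_(m, r))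
    (V : 'M[R]_(n, r)) (s : 'rV[R]_r) (p : 'I_n -> R) (f : {ffun 'I_d -> 'I_n}) :
  M = U *m diag_mx s *m V^T -> U^T *m U = 1%:M -> (forall k, s 0 k != 0) ->
  (forall i, 0 < p i) -> \rank (sampleA M p f) = \rank (sample_span V f).
Proof.
move=> -> U_orth s_neq0 p_gt0.
have c_neq0 (j : 'I_d) : (\row_j (Num.sqrt (d%:R * p (f j)))^-1) 0 j != 0.
  rewrite mxE invr_eq0 sqrtr_eq0 -ltNge mulr_gt0 // ltr0n.
  exact: leq_ltn_trans (leq0n j) (ltn_ord j).
rewrite sampleA_colsub mxrank_mul_diag // -mulmx_colsub -mulmxA.
rewrite (mxrank_mul_linv _ U_orth) mxrank_diag_mul // mxrank_sample_span.
by rewrite -trmx_mxsub mxrank_tr.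
Qed.

Lemma pmin_le (R : realType) n (p : 'I_n -> R) i : pmin p <= p i.
Proof. exact: bigmin_le. Qed.

Lemma pmin_gt0 (R : realType) n (p : 'I_n -> R) : (forall i, 0 < p i) -> 0 < pmin p.
Proof. by move=> p_gt0; apply: lt_bigmin. Qed.

Lemma incoherence_ge0 (R : realType) m n r (U : 'M[R]_(m, r)) (V : 'M[R]_(n, r)) :
  0 <= incoherence U V.
Proof. by rewrite le_max bigmax_ge_id. Qed.

Lemma rownorm2_le_incoherence (R : realType) m n r (U : 'M[R]_(m, r))
    (V : 'M[R]_(n, r)) i :
  rownorm2 V i <= r%:R / n%:R * incoherence U V.
Proof.
case: r U V => [|r] U V; first by rewrite /rownorm2 big_ord0 mulr_ge0 ?incoherence_ge0.
have n_gt0 : (0 < n)%N := leq_ltn_trans (leq0n i) (ltn_ord i).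
have -> : rownorm2 V i = r.+1%:R / n%:R * (n%:R / r.+1%:R * rownorm2 V i).
  by field; rewrite addrC natr1 !pnatr_eq0 -[n != 0%N]lt0n n_gt0.
apply: (ler_wpM2l (_ : 0 <= r.+1%:R / n%:R)) => //.
by rewrite le_max; apply/orP; right; exact: le_bigmax.
Qed.

Lemma sample_size_le (R : realType) n r d (mu pm x : R) :
  0 < r%:R / n%:R * mu -> 0 < pm -> 0 <= x ->
  7 * mu * r%:R * x / (n%:R * pm) <= d%:R -> x <= pm / (r%:R / n%:R * mu) * d%:R.
Proof.
set L := r%:R / n%:R * mu => L_gt0 pm_gt0 x_ge0.
have n_neq0 : n%:R != 0 :> R.
  by apply: contraTneq L_gt0 => n0; rewrite /L n0 invr0 mulr0 mul0r ltxx.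
have -> : 7 * mu * r%:R * x / (n%:R * pm) = 7 * (L * x / pm).
  by rewrite /L; field; rewrite n_neq0 gt_eqF.
move=> hd; have Lx_ge0 : 0 <= L * x / pm.
  exact: divr_ge0 (mulr_ge0 (ltW L_gt0) x_ge0) (ltW pm_gt0).
have Lx_le : L * x / pm <= d%:R by apply: le_trans hd; apply: ler_peMl; rewrite ?ler1n.
by rewrite mulrAC ler_pdivlMr // mulrC [pm * _]mulrC -ler_pdivrMr.
Qed.

Lemma expR_pow_mul_nat_le (R : realType) (r d : nat) (q t : R) :
  (0 < r)%N -> t + ln r%:R <= q * d%:R -> expR (- q) ^+ d * r%:R <= expR (- t).
Proof.
move=> r_gt0 qd; rewrite -expRM_natl -[X in _ * X](@lnK _ r%:R) ?posrE ?ltr0n //.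
by rewrite -expRD ler_expR; lra.
Qed.

Unset Implicit Arguments.

Theorem lemma1 (R : realType) (m n r d : nat) (M : 'M[R]_(m, n))
  (U : 'M[R]_(m, r)) (V : 'M[R]_(n, r)) (s : 'rV[R]_r)
  (p : 'I_n -> R) (t : R) :
  \rank M = r ->
  (* U, V : top-r left/right singular vectors of M (compact SVD) *)
  M = U *m diag_mx s *m V^T ->
  U^T *m U = 1%:M ->
  V^T *m V = 1%:M ->
  (forall k : 'I_r, 0 < s 0 k) ->
  (forall k l : 'I_r, (k <= l)%N -> s 0 l <= s 0 k) ->
  (* probability distribution with positive entries *)
  (forall i, 0 < p i) ->
  \sum_(i < n) p i = 1 ->
  0 < t ->
  7 * incoherence U V * r%:R * (t + ln r%:R) / (n%:R * pmin p) <= d%:R ->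
  1 - expR (- t) <=
    iid_prob p (fun f : {ffun 'I_d -> 'I_n} => \rank (sampleA M p f) == r).
Proof.
(* rank M = r already follows from the SVD, and the order of the singular
   values plays no role. *)
move=> _ M_svd U_orth V_orth s_gt0 _ p_gt0 p_sum1 t_gt0 d_large.
set L := r%:R / n%:R * incoherence U V.
have p_ge0 i : 0 <= p i := ltW (p_gt0 i).
have L_ge0 : 0 <= L by rewrite mulr_ge0 ?incoherence_ge0.
have rownorm2_le := rownorm2_le_incoherence U V.
have step W := mean_rank_deficit_step V_orth p_sum1 W
  (ltW (pmin_gt0 p_gt0)) (@pmin_le _ _ p) L_ge0 rownorm2_le.
have mean_le := mean_rank_deficit_le p_sum1 p_ge0 (expR_ge0 _) step d 0.
rewrite lerBlDr -lerBlDl -iid_probC //.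
apply: le_trans (iid_prob_le_mean _ _ _) (le_trans mean_le _) => //.
- by move=> f; apply: rank_deficit_ge0.
- move=> f; rewrite adds0mx_id (mxrank_sampleA f M_svd U_orth) //.
    exact: rank_deficit_ge1.
  by move=> k; rewrite gt_eqF.
rewrite rank_deficit0; have [r0|r_gt0] := posnP r; first by rewrite r0 mulr0 expR_ge0.
apply: expR_pow_mul_nat_le => //; apply: sample_size_le d_large.
- exact: (rownorm2_ub_gt0 V_orth rownorm2_le r_gt0).
- exact: pmin_gt0.
- by apply: addr_ge0; [exact: ltW | apply: ln_ge0; rewrite ler1n].
Qed.
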